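(* Let $\Lambda$ be a finite connected graph with $N$ vertices (sites), let $\mathfrak{h}$ be a finite-dimensional Hilbert space, and let $\mathcal{H}=\bigotimes_{x\in\Lambda}\mathfrak{h}_x$ with each $\mathfrak{h}_x$ a copy of $\mathfrak{h}$. Let $\mathfrak{h}^s\subset\mathfrak{h}$ be a subspace, $\mathfrak{h}^s_x\subset\mathfrak{h}_x$ its copy at site $x$, and let $\mathrm{Sym}^N(\mathfrak{h}^s)\subset\bigotimes_{x\in\Lambda}\mathfrak{h}^s_x\subset\mathcal{H}$ be the totally symmetric subspace. If a linear operator $\hat{O}$ on $\mathcal{H}$ satisfies $\hat{O}v=0$ for all $v\in\mathrm{Sym}^N(\mathfrak{h}^s)$, then $\hat{O}$ can be written as $$\hat{O}=\sum_{x\in\Lambda}\hat{o}^{(1)}_{[x]}\hat{P}_x+\sum_{\langle x,y\rangle}\hat{o}^{(2)}_{[xy]}\hat{P}_{xy},$$ where the second sum runs over pairs of nearest-neighbour (adjacent) sites, each $\hat{P}_x$ is an orthogonal projector acting non-trivially only on site $x$, each $\hat{P}_{xy}$ is an orthogonal projector acting non-trivially only on the pair of sites $x,y$, every $\hat{P}_x$ and $\hat{P}_{xy}$ annihilates $\mathrm{Sym}^N(\mathfrak{h}^s)$, and $\hat{o}^{(1)}_{[x]},\hat{o}^{(2)}_{[xy]}$ are some linear operators on $\mathcal{H}$ (not required to be local).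
   Context: For a permutation $\sigma\in\mathfrak{S}_N$ of the sites, $\hat{\sigma}$ denotes the operator on $\mathcal{H}$ permuting tensor factors: $\hat{\sigma}\bigotimes_{x}|e_x\rangle_x=\bigotimes_x|e_{\sigma(x)}\rangle_x$. The totally symmetric subspace is $\mathrm{Sym}^N(\mathfrak{h}^s)=\{v\in\bigotimes_{x\in\Lambda}\mathfrak{h}^s_x:\hat{\sigma}v=v\ \forall\sigma\in\mathfrak{S}_N\}$, viewed as a subspace of $\mathcal{H}$. An operator ''annihilates'' a subspace if it maps every vector of it to $0$. *)

(* Concrete model of the spin system:
   sites Λ = 'I_N, one-site space h = C^d (standard basis 'I_d, standard
   inner product), H = ⊗_x h_x with product basis indexed by
   configurations b : {ffun 'I_N -> 'I_d}.  Operators on H are given by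
   their matrix kernels in that basis. *)
From HB Require Import structures.
From mathcomp Require Import all_boot all_order all_algebra all_fingroup.
Set Implicit Arguments. Unset Strict Implicit. Unset Printing Implicit Defensive.
Import Order.TTheory GRing.Theory Num.Theory.
Local Open Scope ring_scope.

Section Defs.
Variables (C : numClosedFieldType) (N d : nat).

Definition conf := {ffun 'I_N -> 'I_d}.
Definition vec := conf -> C.
Definition op := conf -> conf -> C.

Definition opapply (A : op) (v : vec) : vec := fun a => \sum_(b : conf) A a b * v b.
Definition opmul (A B : op) : op := fun a b => \sum_(c : conf) A a c * B c b.
Definition adjoint (A : op) : op := fun a b => (A b a)^*.

Definition is_orth_proj (P : op) : Prop :=
  (forall a b, opmul P P a b = P a b) /\ (forall a b, adjoint P a b = P a b).

Definition site1 (x : 'I_N) (p : 'M[C]_d) : op := fun a b =>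
  p (a x) (b x) * (if [forall z, (z != x) ==> (a z == b z)] then 1 else 0).
(* q acting on the pair of sites x,y (q i j k l = <e_i ⊗ e_j| q |e_k ⊗ e_l>),
   identity on all other sites *)
Definition site2 (x y : 'I_N) (q : 'I_d -> 'I_d -> 'I_d -> 'I_d -> C) : op :=
  fun a b => q (a x) (a y) (b x) (b y) *
    (if [forall z, ((z != x) && (z != y)) ==> (a z == b z)] then 1 else 0).

Definition acts_on1 (x : 'I_N) (P : op) : Prop :=
  exists p : 'M[C]_d, forall a b, P a b = site1 x p a b.
Definition acts_on2 (x y : 'I_N) (P : op) : Prop :=
  exists q, forall a b, P a b = site2 x y q a b.

Definition prod_vec (u : 'I_N -> 'rV[C]_d) : vec :=
  fun b => \prod_(x : 'I_N) u x 0 (b x).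

(* the subspace h^s of h = C^d is the row space of S;
   ⊗_x h^s_x = span of product vectors with all factors in h^s *)
Definition in_tensor (S : 'M[C]_d) (v : vec) : Prop :=
  exists (n : nat) (c : 'I_n -> C) (u : 'I_n -> 'I_N -> 'rV[C]_d),
    (forall i x, (u i x <= S)%MS) /\
    (forall b, v b = \sum_(i < n) c i * prod_vec (u i) b).

(* hat sigma : basis vector e_b  |->  e_(b o sigma) *)
Definition hatperm (s : 'S_N) : op :=
  fun a b => if a == [ffun x => b (s x)] then 1 else 0.

Definition in_Sym (S : 'M[C]_d) (v : vec) : Prop :=
  in_tensor S v /\ forall (s : 'S_N) a, opapply (hatperm s) v a = v a.

Definition annihilates_Sym (S : 'M[C]_d) (O : op) : Prop :=
  forall v, in_Sym S v -> forall a, opapply O v a = 0.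

End Defs.

From HB Require Import structures.
From mathcomp Require Import all_boot all_order all_algebra all_fingroup.
Set Implicit Arguments. Unset Strict Implicit. Unset Printing Implicit Defensive.
Import Order.TTheory GRing.Theory Num.Theory Num.Def.
Local Open Scope ring_scope.

(* Let P_x be the orthogonal projector onto the complement of h^s acting on
   site x, and P_xy the antisymmetriser (1 - swap_xy)/2 of two adjacent sites.
   All of them annihilate Sym^N(h^s).  Conversely, a vector killed by every P_x
   is fixed by the tensor product of the projectors 1 - P_x onto h^s, hence lies
   in the tensor product of the h^s_x; a vector killed by every P_xy is
   invariant under the transpositions along edges, which generate the
   symmetric group because the graph is connected.  So Sym^N(h^s) is exactly
   the common kernel of the P's, and an operator vanishing there has its rows
   in the span of the rows of the P's, i.e. O = sum o_x P_x + sum o_xy P_xy. *)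

Lemma sum_mulmx_of_kernel_sub (F : fieldType) (I : finType) (P : pred I) m n
    (B : I -> 'M[F]_n) (M : 'M[F]_(m, n)) :
  (forall v : 'cV[F]_n, (forall i, P i -> B i *m v = 0) -> M *m v = 0) ->
  exists W : I -> 'M[F]_(m, n), M = \sum_(i | P i) W i *m B i.
Proof.
move=> kerB; apply/sub_sumsmxP; rewrite submxE.
(* [M] vanishes on the columns of [K], which lie in the common kernel of the [B i]. *)
set K := cokermx _; have KB i : P i -> B i *m K = 0.
  by move=> Pi; apply/eqP; rewrite -submxE (sumsmx_sup i).
apply/eqP/matrixP => r j; rewrite mxE.
have colK i : P i -> B i *m col j K = 0.
  by move=> Pi; rewrite colE mulmxA KB // mul0mx.
by have /colP/(_ r) := kerB _ colK; rewrite colE mulmxA -colE !mxE.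
Qed.

Lemma sum_eq_indicator (R : pzSemiRingType) (T : finType) (i : T) (f : T -> R) :
  \sum_j (i == j)%:R * f j = f i.
Proof.
rewrite (bigD1 i) //= eqxx mul1r big1 ?addr0 // => j nj.
by rewrite eq_sym (negbTE nj) mul0r.
Qed.

Section SiteOperators.
Variables (C : numClosedFieldType) (N d : nat).
Local Notation conf := (conf N d).
Local Notation op := (op C N d).
Local Notation vec := (vec C N d).

Lemma sum_conf (F : conf -> C) : \sum_(b : conf) F b = \sum_(k < #|{: conf}|) F (enum_val k).
Proof.
rewrite (reindex (@enum_val _ (pred_of_simpl (@predT conf)))) //.
by exists enum_rank => [k _|b _]; [exact: enum_valK | exact: enum_rankK].
Qed.

Definition upd (a : conf) (x : 'I_N) (j : 'I_d) : conf :=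
  [ffun z => if z == x then j else a z].

Lemma upd_eq a x j : upd a x j x = j.
Proof. by rewrite ffunE eqxx. Qed.

Lemma upd_neq a x j z : z != x -> upd a x j z = a z.
Proof. by move=> zx; rewrite ffunE (negbTE zx). Qed.

Lemma upd_id a x : upd a x (a x) = a.
Proof. by apply/ffunP=> z; rewrite ffunE; case: eqP => // ->. Qed.

Lemma agree_offC x (a b : conf) :
  [forall z, (z != x) ==> (b z == a z)] = [forall z, (z != x) ==> (a z == b z)].
Proof. by apply/eq_forallb => z; rewrite [b z == _]eq_sym. Qed.

Lemma agree_off_upd x (a b : conf) j :
  [forall z, (z != x) ==> (upd a x j z == b z)] = [forall z, (z != x) ==> (a z == b z)].
Proof. by apply/eq_forallb => z; case: (boolP (z != x)) => //= zx; rewrite upd_neq. Qed.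

Lemma sum_agree_off (F : conf -> C) x (a : conf) :
  \sum_(b : conf) F b * (if [forall z, (z != x) ==> (a z == b z)] then 1 else 0)
  = \sum_(j : 'I_d) F (upd a x j).
Proof.
rewrite (partition_big (fun b : conf => b x) predT) //=; apply: eq_bigr => j _.
rewrite (bigD1 (upd a x j)) /=; last by rewrite upd_eq.
have -> : [forall z, (z != x) ==> (a z == upd a x j z)].
  by apply/forallP => z; apply/implyP => zx; rewrite upd_neq.
rewrite mulr1 big1 ?addr0 // => b /andP [/eqP bx nb]; case: ifP; rewrite ?mulr0 // => /forallP ab.
case/eqP: nb; apply/ffunP => z; rewrite ffunE; case: eqP => [->|/eqP zx] //.
by apply/esym/eqP; exact: implyP (ab z) zx.
Qed.

Lemma site1_apply (x : 'I_N) (p : 'M[C]_d) (v : vec) a :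
  opapply (site1 x p) v a = \sum_j p (a x) j * v (upd a x j).
Proof.
rewrite /opapply /site1; under eq_bigr do rewrite mulrAC.
by rewrite sum_agree_off; under eq_bigr do rewrite upd_eq.
Qed.

Lemma site1_mul (x : 'I_N) (p p' : 'M[C]_d) (a b : conf) :
  opmul (site1 x p) (site1 x p') a b = site1 x (p *m p') a b.
Proof.
rewrite /opmul /site1; under eq_bigr do rewrite mulrAC.
rewrite sum_agree_off mxE mulr_suml; apply: eq_bigr => j _.
by rewrite upd_eq agree_off_upd !mulrA.
Qed.

Lemma site1_adjoint (x : 'I_N) (p : 'M[C]_d) (a b : conf) :
  adjoint (site1 x p) a b = site1 x (map_mx conjC p^T) a b.
Proof.
rewrite /adjoint /site1 !mxE rmorphM /= agree_offC.
by case: ifP; rewrite ?conjC1 ?conjC0.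
Qed.

Lemma is_orth_proj_site1 (x : 'I_N) (p : 'M[C]_d) :
  p *m p = p -> map_mx conjC p^T = p -> is_orth_proj (site1 x p).
Proof. by move=> pp p_herm; split=> a b; rewrite ?site1_mul ?site1_adjoint ?pp ?p_herm. Qed.

Lemma opapply_lincomb (A : op) (v : vec) n (c : 'I_n -> C) (u : 'I_n -> vec) :
  (forall b, v b = \sum_(i < n) c i * u i b) ->
  forall a, opapply A v a = \sum_(i < n) c i * opapply A (u i) a.
Proof.
move=> vE a; rewrite /opapply; under eq_bigr do rewrite vE mulr_sumr.
rewrite exchange_big; apply: eq_bigr => i _; rewrite mulr_sumr.
by apply: eq_bigr => b _; rewrite mulrCA.
Qed.

Lemma site1_prod_vec (x : 'I_N) (p : 'M[C]_d) (u : 'I_N -> 'rV[C]_d) a :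
  opapply (site1 x p) (prod_vec u) a =
  (p *m (u x)^T) (a x) 0 * \prod_(z | z != x) u z 0 (a z).
Proof.
rewrite site1_apply mxE mulr_suml; apply: eq_bigr => j _.
rewrite /prod_vec (bigD1 x) //= upd_eq mxE mulrA; congr (_ * _).
by apply: eq_bigr => z zx; rewrite upd_neq.
Qed.

Lemma annihilates_Sym_site1 (S p : 'M[C]_d) (x : 'I_N) :
  (forall u : 'rV[C]_d, (u <= S)%MS -> p *m u^T = 0) ->
  annihilates_Sym S (site1 x p).
Proof.
move=> pS v [[n [c [u [uS vE]]]] _] a.
rewrite (opapply_lincomb (u := fun i => prod_vec (u i)) _ vE) big1 // => i _.
by rewrite site1_prod_vec pS // mxE mul0r mulr0.
Qed.

Section ProductKernel.
Variables (p : 'M[C]_d) (v : vec).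
Hypothesis v_ker : forall (x : 'I_N) a, opapply (site1 x p) v a = 0.
Local Notation q := (1%:M - p).

Lemma site1_compl_fix (x : 'I_N) a : opapply (site1 x q) v a = v a.
Proof.
have := v_ker x a; rewrite !site1_apply => p_ker.
under eq_bigr do rewrite !mxE mulrBl.
by rewrite sumrB p_ker subr0 sum_eq_indicator upd_id.
Qed.

Definition partial_kernel (k : nat) (a b : conf) : C :=
  \prod_(x : 'I_N) (if (x < k)%N then q (a x) (b x) else (a x == b x)%:R).

Lemma prod_eq_indicator (a b : conf) : \prod_(x : 'I_N) (a x == b x)%:R = (a == b)%:R :> C.
Proof.
have [->|nab] := eqVneq a b; first by rewrite big1 // => x _; rewrite eqxx.
have /existsP [z abz] : [exists z, a z != b z].
  by rewrite -negb_forall; apply: contra nab => /forallP ab; apply/eqP/ffunP => z; apply/eqP.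
by rewrite (bigD1 z) //= (negbTE abz) mul0r.
Qed.

Lemma partial_kernelS (x : 'I_N) (a b : conf) :
  \sum_(c : conf) partial_kernel x a c * site1 x q c b = partial_kernel x.+1 a b.
Proof.
rewrite /site1; under eq_bigr do rewrite mulrA agree_offC.
rewrite sum_agree_off /partial_kernel [in RHS](bigD1 x) //= ltnSn.
have off_x z : z != x -> (z < x.+1)%N = (z < x)%N.
  by move=> zx; rewrite ltnS leq_eqVlt [_ == _](negbTE zx).
under eq_bigr => j _.
  rewrite (bigD1 x) //= ltnn upd_eq.
  under eq_bigr => z zx do rewrite upd_neq //.
  over.
under [in RHS]eq_bigr => z zx do rewrite off_x //.
under eq_bigr do rewrite mulrAC -mulrA.
by rewrite sum_eq_indicator.
Qed.

Lemma partial_kernel_fix k : (k <= N)%N -> forall a, v a = \sum_(b : conf) partial_kernel k a b * v b.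
Proof.
elim: k => [_ a|k IH kN a].
  have kernel0 b : partial_kernel 0 a b = (a == b)%:R.
    by rewrite -prod_eq_indicator; apply: eq_bigr.
  by under eq_bigr do rewrite kernel0; rewrite sum_eq_indicator.
rewrite (IH (ltnW kN) a).
under eq_bigr do rewrite -(site1_compl_fix (Ordinal kN)) /opapply mulr_sumr.
rewrite exchange_big; apply: eq_bigr => b _.
by rewrite -(partial_kernelS (Ordinal kN)) mulr_suml; under eq_bigr do rewrite mulrA.
Qed.

Lemma product_kernel_fix a : v a = \sum_(b : conf) (\prod_(x : 'I_N) q (a x) (b x)) * v b.
Proof.
rewrite (partial_kernel_fix (leqnn N) a); apply: eq_bigr => b _.
by congr (_ * _); apply: eq_bigr => x _; rewrite ltn_ord.
Qed.

Lemma in_tensor_of_site1_kernel (S : 'M[C]_d) :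
  (q^T <= S)%MS -> in_tensor S v.
Proof.
move=> qS; exists #|{: conf}|, (fun k => v (enum_val k)),
  (fun k x => row ((enum_val k : conf) x) q^T); split=> [k x|b].
  exact: submx_trans (row_sub _ _) qS.
rewrite product_kernel_fix sum_conf; apply: eq_bigr => k _.
by rewrite mulrC /prod_vec; congr (_ * _); apply: eq_bigr => x _; rewrite !mxE.
Qed.

End ProductKernel.

Definition cperm (a : conf) (s : 'S_N) : conf := [ffun z => a (s z)].

Lemma cpermM (a : conf) s t : cperm (cperm a s) t = cperm a (t * s).
Proof. by apply/ffunP => z; rewrite !ffunE permM. Qed.

Lemma cperm1 (a : conf) : cperm a 1 = a.
Proof. by apply/ffunP => z; rewrite !ffunE perm1. Qed.

Lemma cpermK s : cancel (cperm^~ s) (cperm^~ s^-1%g).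
Proof. by move=> a; rewrite cpermM mulVg cperm1. Qed.

Lemma cpermKV s : cancel (cperm^~ s^-1%g) (cperm^~ s).
Proof. by move=> a; rewrite cpermM mulgV cperm1. Qed.

Lemma eq_cperm (a b : conf) s : (a == cperm b s) = (b == cperm a s^-1).
Proof. by apply/eqP/eqP => [->|->]; rewrite (cpermK, cpermKV). Qed.

Lemma sum_cperm_indicator (a : conf) s (f : conf -> C) :
  \sum_(b : conf) (a == cperm b s)%:R * f b = f (cperm a s^-1).
Proof. by under eq_bigr do rewrite eq_cperm eq_sym; rewrite sum_eq_indicator. Qed.

Lemma hatperm_apply s (v : vec) a : opapply (hatperm C s) v a = v (cperm a s^-1).
Proof.
rewrite -sum_cperm_indicator; apply: eq_bigr => b _.
by rewrite /hatperm; case: eqP.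
Qed.

Definition antisym2 (i j k l : 'I_d) : C :=
  2^-1 * (((i == k) && (j == l))%:R - ((i == l) && (j == k))%:R).

Definition agree_off2 (x y : 'I_N) (a b : conf) :=
  [forall z, ((z != x) && (z != y)) ==> (a z == b z)].

Lemma eq_conf_off2 (x y : 'I_N) (a b : conf) : x != y ->
  (a == b) = [&& a x == b x, a y == b y & agree_off2 x y a b].
Proof.
move=> xy; apply/eqP/and3P => [->|[/eqP abx /eqP aby /forallP ab]].
  by split => //; apply/forallP => z; rewrite eqxx implybT.
apply/ffunP => z; case: (eqVneq z x) => [->//|zx]; case: (eqVneq z y) => [->//|zy].
by move: (ab z); rewrite zx zy => /eqP.
Qed.

Lemma agree_off2_tperm (x y : 'I_N) (a b : conf) :
  agree_off2 x y a (cperm b (tperm x y)) = agree_off2 x y a b.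
Proof.
apply/eq_forallb => z; case: (boolP ((z != x) && (z != y))) => //= /andP [zx zy].
by rewrite ffunE tpermD // eq_sym.
Qed.

Lemma site2_antisymE (x y : 'I_N) (a b : conf) : x != y ->
  site2 x y antisym2 a b = 2^-1 * ((a == b)%:R - (a == cperm b (tperm x y))%:R).
Proof.
move=> xy; rewrite /site2 /antisym2 -/(agree_off2 x y a b).
rewrite (eq_conf_off2 a b xy) (eq_conf_off2 a _ xy) agree_off2_tperm !ffunE tpermL tpermR.
by case: agree_off2; rewrite ?andbT ?andbF ?subrr ?mulr0 ?mulr1.
Qed.

Lemma site2_antisym_apply (x y : 'I_N) (v : vec) a : x != y ->
  opapply (site2 x y antisym2) v a = 2^-1 * (v a - v (cperm a (tperm x y))).
Proof.
move=> xy; rewrite /opapply; under eq_bigr do rewrite site2_antisymE // -mulrA mulrBl.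
by rewrite -mulr_sumr sumrB sum_eq_indicator sum_cperm_indicator tpermV.
Qed.

Lemma site2_antisym_swap (x y : 'I_N) (a b : conf) : x != y ->
  site2 x y antisym2 (cperm a (tperm x y)) b = - site2 x y antisym2 a b.
Proof.
move=> xy; rewrite !site2_antisymE // eq_sym eq_cperm tpermV.
rewrite (inj_eq (can_inj (cpermK (tperm x y)))).
by rewrite -mulrN opprB.
Qed.

Lemma is_orth_proj_site2_antisym (x y : 'I_N) : x != y -> is_orth_proj (site2 x y antisym2).
Proof.
move=> xy; split=> a b.
  rewrite /opmul; under eq_bigr do rewrite site2_antisymE // -mulrA mulrBl.
  rewrite -mulr_sumr sumrB sum_eq_indicator sum_cperm_indicator tpermV.
  by rewrite site2_antisym_swap // opprK mulrC mulrDl -splitr.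
rewrite /adjoint !site2_antisymE // rmorphM rmorphB fmorphV !rmorph_nat eq_sym.
by rewrite eq_cperm tpermV.
Qed.

Lemma annihilates_Sym_site2_antisym (S : 'M[C]_d) (x y : 'I_N) : x != y ->
  annihilates_Sym S (site2 x y antisym2).
Proof.
move=> xy v [_ v_sym] a; rewrite site2_antisym_apply //.
by rewrite -(v_sym (tperm x y) a) hatperm_apply tpermV subrr mulr0.
Qed.

Section EdgeInvariance.
Variables (adj : rel 'I_N) (adj_sym : symmetric adj) (adj_irr : irreflexive adj).
Hypothesis adj_conn : forall x y : 'I_N, connect adj x y.
Variable v : vec.
Hypothesis v_edge_ker : forall x y : 'I_N, (x < y)%N -> adj x y ->
  forall a, opapply (site2 x y antisym2) v a = 0.

Definition invariant_under (s : 'S_N) := forall a, v (cperm a s) = v a.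

Lemma invariant_under1 : invariant_under 1.
Proof. by move=> a; rewrite cperm1. Qed.

Lemma invariant_underM s t :
  invariant_under s -> invariant_under t -> invariant_under (s * t).
Proof. by move=> vs vt a; rewrite -cpermM vs vt. Qed.

Lemma adj_neq x y : adj x y -> x != y.
Proof. by apply: contraTneq => ->; rewrite adj_irr. Qed.

Lemma invariant_under_edge x y : adj x y -> invariant_under (tperm x y).
Proof.
wlog xy : x y / (x < y)%N => [hwlog|] exy.
  have := adj_neq exy; rewrite neq_ltn => /orP [] ?; first exact: hwlog.
  by rewrite tpermC; apply: hwlog => //; rewrite adj_sym.
move=> a; have /eqP := v_edge_ker xy exy a.
rewrite site2_antisym_apply ?adj_neq // mulf_eq0 invr_eq0 pnatr_eq0 /= subr_eq0.
by move/eqP.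
Qed.

Lemma invariant_under_tperm x y : invariant_under (tperm x y).
Proof.
have /connectP [p p_xy ->] := adj_conn x y.
elim: p x p_xy => [|z p IH] x /=; first by rewrite tperm1 => _; exact: invariant_under1.
case/andP => xz p_zw; set w := last z p; have IH_zw := IH z p_zw.
have [->|xw] := eqVneq x w; first by rewrite tperm1; exact: invariant_under1.
have [zw|zw] := eqVneq z w; first by rewrite -zw; exact: invariant_under_edge.
have -> : tperm x w = (tperm z w ^ tperm x z)%g by rewrite tpermJ tpermR tpermD.
rewrite conjgE tpermV mulgA.
by do 2?apply: invariant_underM => //; exact: invariant_under_edge.
Qed.

Lemma invariant_under_all s : invariant_under s.
Proof.
have [ts -> _] := prod_tpermP s; elim: ts => [|t ts IH].
  by rewrite big_nil; exact: invariant_under1.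
by rewrite big_cons; apply: invariant_underM => //; exact: invariant_under_tperm.
Qed.

Lemma hatperm_fix s a : opapply (hatperm C s) v a = v a.
Proof. by rewrite hatperm_apply invariant_under_all. Qed.

End EdgeInvariance.

End SiteOperators.

Arguments antisym2 {C d}.

Section OrthoProjector.
Variables (C : numClosedFieldType) (d : nat) (S : 'M[C]_d).

(* [orthoproj] acts on column vectors, matching the action [p (a x) j] of a
   site operator on the coordinates of a vector. *)
Definition onb := schmidt (row_base S).
Definition orthoproj : 'M[C]_d := onb^T *m map_mx conjC onb.
Definition orthoproj_perp : 'M[C]_d := 1%:M - orthoproj.

Lemma onb_unitary : map_mx conjC onb *m onb^T = 1%:M.
Proof.
have /unitarymxP onbK := schmidt_unitarymx (row_base S) (rank_leq_col S).
by have := congr1 (map_mx conjC) onbK; rewrite map_mxM map_mxCK map_mx1.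
Qed.

Lemma eqmx_onb : (onb :=: S)%MS.
Proof. exact: eqmx_trans (eqmx_schmidt_free (row_base_free S)) (eq_row_base S). Qed.

Lemma orthoproj_idem : orthoproj *m orthoproj = orthoproj.
Proof. by rewrite /orthoproj -!mulmxA [X in onb^T *m X]mulmxA onb_unitary mul1mx. Qed.

Lemma orthoproj_perp_idem : orthoproj_perp *m orthoproj_perp = orthoproj_perp.
Proof. by rewrite mulmxBl mul1mx mulmxBr mulmx1 orthoproj_idem subrr subr0. Qed.

Lemma orthoproj_perp_adjoint : map_mx conjC orthoproj_perp^T = orthoproj_perp.
Proof.
rewrite /orthoproj_perp linearB /= trmx1 map_mxB map_mx1 /orthoproj trmx_mul trmxK.
by rewrite map_mxM map_trmx map_mxCK.
Qed.

Lemma orthoproj_perp_ker (u : 'rV[C]_d) : (u <= S)%MS -> orthoproj_perp *m u^T = 0.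
Proof.
rewrite -eqmx_onb => /submxP [w ->].
rewrite mulmxBl mul1mx /orthoproj trmx_mul -!mulmxA [map_mx _ _ *m (_ *m _)]mulmxA.
by rewrite onb_unitary mul1mx subrr.
Qed.

Lemma orthoproj_perp_compl_sub : ((1%:M - orthoproj_perp)^T <= S)%MS.
Proof.
by rewrite /orthoproj_perp opprB addrC subrK /orthoproj trmx_mul trmxK -eqmx_onb submxMl.
Qed.

End OrthoProjector.

Section MatrixEncoding.
Variables (C : numClosedFieldType) (N d : nat).
Local Notation conf := (conf N d).
Local Notation op := (op C N d).
Local Notation n := #|{: conf}|.

Definition mx_of_op (A : op) : 'M[C]_n := \matrix_(i, j) A (enum_val i) (enum_val j).
Definition op_of_mx (M : 'M[C]_n) : op := fun a b => M (enum_rank a) (enum_rank b).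

Lemma mx_of_opE (A : op) a b : mx_of_op A (enum_rank a) (enum_rank b) = A a b.
Proof. by rewrite mxE !enum_rankK. Qed.

Lemma opmul_op_of_mx (M : 'M[C]_n) (A : op) a b :
  opmul (op_of_mx M) A a b = (M *m mx_of_op A) (enum_rank a) (enum_rank b).
Proof.
rewrite /opmul sum_conf mxE; apply: eq_bigr => k _.
by rewrite /op_of_mx enum_valK mxE enum_rankK.
Qed.

Lemma opapply_mx_of_op (A : op) (w : 'cV[C]_n) a :
  opapply A (fun b => w (enum_rank b) 0) a = (mx_of_op A *m w) (enum_rank a) 0.
Proof.
rewrite /opapply sum_conf mxE; apply: eq_bigr => k _.
by rewrite enum_valK !mxE enum_rankK.
Qed.

End MatrixEncoding.

Lemma in_Sym_of_local_kernels (C : numClosedFieldType) (N d : nat) (adj : rel 'I_N) :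
    symmetric adj -> irreflexive adj -> (forall x y, connect adj x y) ->
  forall (S : 'M[C]_d) (v : vec C N d),
  (forall (x : 'I_N) a, opapply (site1 x (orthoproj_perp S)) v a = 0) ->
  (forall x y : 'I_N, (x < y)%N -> adj x y -> forall a, opapply (site2 x y antisym2) v a = 0) ->
  in_Sym S v.
Proof.
move=> adj_sym adj_irr adj_conn S v v_site v_edge; split.
  exact: (in_tensor_of_site1_kernel v_site (orthoproj_perp_compl_sub S)).
exact: (hatperm_fix adj_sym adj_irr adj_conn v_edge).
Qed.

Theorem lemma5p1 (C : numClosedFieldType) (N d : nat) (adj : rel 'I_N)
  (adj_sym : symmetric adj) (adj_irr : irreflexive adj)
  (adj_conn : forall x y : 'I_N, connect adj x y)
  (S : 'M[C]_d) (O : op C N d) :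
  annihilates_Sym S O ->
  exists (o1 P1 : 'I_N -> op C N d) (o2 P2 : 'I_N -> 'I_N -> op C N d),
    (forall x : 'I_N, acts_on1 x (P1 x) /\ is_orth_proj (P1 x)
                      /\ annihilates_Sym S (P1 x)) /\
    (forall x y : 'I_N, (x < y)%N -> adj x y ->
        acts_on2 x y (P2 x y) /\ is_orth_proj (P2 x y)
        /\ annihilates_Sym S (P2 x y)) /\
    (forall a b : conf N d,
       O a b = \sum_(x : 'I_N) opmul (o1 x) (P1 x) a b
             + \sum_(x : 'I_N) \sum_(y : 'I_N | (x < y)%N && adj x y)
                   opmul (o2 x y) (P2 x y) a b).
Proof.
move=> O_Sym.
pose P1 x : op C N d := site1 x (orthoproj_perp S).
pose P2 x y : op C N d := site2 x y antisym2.
pose local (i : 'I_N + 'I_N * 'I_N) :=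
  if i is inr e then (e.1 < e.2)%N && adj e.1 e.2 else true.
pose P i := match i with inl x => P1 x | inr e => P2 e.1 e.2 end.
have [W OW] : exists W, mx_of_op O = \sum_(i | local i) W i *m mx_of_op (P i).
  apply: sum_mulmx_of_kernel_sub => w w_ker; apply/colP => r.
  have w_Sym : in_Sym S (fun b => w (enum_rank b) 0).
    apply: (in_Sym_of_local_kernels adj_sym adj_irr adj_conn) => [x|x y xy exy] a.
      by rewrite opapply_mx_of_op (w_ker (inl x)) // mxE.
    by rewrite opapply_mx_of_op (w_ker (inr (x, y))) /= ?xy ?exy // mxE.
  by rewrite -[r]enum_valK -opapply_mx_of_op O_Sym // mxE.
exists (fun x => op_of_mx (W (inl x))), P1, (fun x y => op_of_mx (W (inr (x, y)))), P2.
split; [|split].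
- move=> x; split; first by exists (orthoproj_perp S).
  split; first exact: is_orth_proj_site1 (orthoproj_perp_idem S) (orthoproj_perp_adjoint S).
  exact: (annihilates_Sym_site1 x (@orthoproj_perp_ker _ _ S)).
- move=> x y xy _; have x_neq_y : x != y by rewrite neq_ltn xy.
  split; first by exists antisym2.
  by split; [exact: is_orth_proj_site2_antisym | exact: annihilates_Sym_site2_antisym].
- move=> a b; rewrite -mx_of_opE OW big_sumType mxE !summxE.
  rewrite [X in _ = _ + X]pair_big_dep /=.
  by congr (_ + _); [apply: eq_bigr => x _ | apply: eq_bigr => [[x y] _]]; rewrite opmul_op_of_mx.
Qed.
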